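(* Let $\pi$ be a full-support distribution on $K$ arms, $r\in\mathbb{R}^K$, $\eta>0$. For any arm $k$ with $U(k)<0$, the DG gate satisfies $w(k)\le\pi(k)^{|U(k)|/\eta}$. In particular, if $j$ is an arm with $r(j)>r(k)$ and $|U(k)|\ge\Delta_{jk}/2$, then \[ w(k)\,\pi(k)\;\le\;\pi(k)^{1+\Delta_{jk}/(2\eta)}. \]
   Context: $U(a):=r(a)-\pi^\top r$ (advantage), $\ell(a):=-\log\pi(a)$ (surprisal), $\Delta_{ab}:=r(a)-r(b)$, and the DG gate is $w(a):=\sigma(U(a)\ell(a)/\eta)$ with $\sigma(x)=1/(1+e^{-x})$. *)

(* concrete reals R. Arms are indexed by 0..K-1 (nat). *)
From Stdlib Require Import Reals Lra.
Open Scope R_scope.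

Fixpoint sumK (K : nat) (f : nat -> R) : R :=
  match K with
  | O => 0
  | S n => sumK n f + f n
  end.

Definition full_support_dist (K : nat) (pi : nat -> R) : Prop :=
  (forall a, (a < K)%nat -> 0 < pi a) /\ sumK K pi = 1.

Definition baseline (K : nat) (pi r : nat -> R) : R :=
  sumK K (fun a => pi a * r a).

Definition adv (K : nat) (pi r : nat -> R) (a : nat) : R :=
  r a - baseline K pi r.

Definition surprisal (pi : nat -> R) (a : nat) : R := - ln (pi a).

Definition sigmoid (x : R) : R := / (1 + exp (- x)).

Definition gate (K : nat) (pi r : nat -> R) (eta : R) (a : nat) : R :=
  sigmoid (adv K pi r a * surprisal pi a / eta).

Definition gap (r : nat -> R) (a b : nat) : R := r a - r b.

(** The gate argument is [U(k) l(k) / eta = (|U(k)| / eta) ln pi(k)] when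
    [U(k) <= 0], and [sigma(x) <= e^x] for every [x], so the gate is at most
    [pi(k)^(|U(k)|/eta)].  For the second bound, write [pi(k) = pi(k)^1] and
    use that [t |-> pi(k)^t] is nonincreasing because [pi(k) <= 1]. *)

From Stdlib Require Import Reals Lra Lia.
Open Scope R_scope.

Lemma sumK_nonneg (n : nat) (f : nat -> R) :
  (forall a, (a < n)%nat -> 0 <= f a) -> 0 <= sumK n f.
Proof.
  induction n as [|n IH]; simpl; intros Hf; [lra|].
  assert (0 <= f n) by (apply Hf; lia).
  assert (0 <= sumK n f) by (apply IH; intros; apply Hf; lia).
  lra.
Qed.

Lemma sumK_ge_term (n : nat) (f : nat -> R) (k : nat) :
  (forall a, (a < n)%nat -> 0 <= f a) -> (k < n)%nat -> f k <= sumK n f.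
Proof.
  induction n as [|n IH]; simpl; intros Hf Hk; [lia|].
  assert (0 <= f n) by (apply Hf; lia).
  destruct (Nat.eq_dec k n) as [->|Hkn].
  - assert (0 <= sumK n f) by (apply sumK_nonneg; intros; apply Hf; lia).
    lra.
  - assert (f k <= sumK n f) by (apply IH; [intros; apply Hf; lia|lia]).
    lra.
Qed.

Lemma full_support_dist_le_1 (K : nat) (pi : nat -> R) (k : nat) :
  full_support_dist K pi -> (k < K)%nat -> pi k <= 1.
Proof.
  intros [Hpos Hsum] Hk.
  rewrite <- Hsum.
  apply sumK_ge_term; [intros a Ha; left; apply Hpos, Ha | exact Hk].
Qed.

Lemma exp_le_exp (x y : R) : x <= y -> exp x <= exp y.
Proof.
  intros [Hlt | ->]; [left; apply exp_increasing, Hlt | right; reflexivity].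
Qed.

Lemma ln_le_0 (x : R) : 0 < x -> x <= 1 -> ln x <= 0.
Proof.
  intros Hx [Hlt | ->]; [left; rewrite <- ln_1; apply ln_increasing; lra|].
  rewrite ln_1; lra.
Qed.

Lemma Rpower_le_exponent_anti (x a b : R) :
  0 < x <= 1 -> a <= b -> Rpower x b <= Rpower x a.
Proof.
  intros [Hx0 Hx1] Hab; unfold Rpower.
  apply exp_le_exp.
  assert (ln x <= 0) by (apply ln_le_0; assumption).
  nra.
Qed.

Lemma sigmoid_le_exp (x : R) : sigmoid x <= exp x.
Proof.
  unfold sigmoid.
  assert (Hprod : exp x * exp (- x) = 1).
  { rewrite <- exp_plus, Rplus_opp_r; apply exp_0. }
  assert (0 < exp (- x)) by apply exp_pos.
  assert (0 < exp x) by apply exp_pos.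
  apply (Rmult_le_reg_r (1 + exp (- x))); [lra|].
  rewrite Rinv_l by lra.
  lra.
Qed.

Lemma gate_le_Rpower (K : nat) (pi r : nat -> R) (eta : R) (a : nat) :
  adv K pi r a <= 0 ->
  gate K pi r eta a <= Rpower (pi a) (Rabs (adv K pi r a) / eta).
Proof.
  intros HU.
  unfold gate, Rpower.
  rewrite Rabs_left1 by exact HU.
  replace (- adv K pi r a / eta * ln (pi a))
    with (adv K pi r a * surprisal pi a / eta) by (unfold surprisal, Rdiv; ring).
  apply sigmoid_le_exp.
Qed.

Lemma gate_mul_prob_le (K : nat) (pi r : nat -> R) (eta c : R) (a : nat) :
  0 < eta -> 0 < pi a <= 1 -> adv K pi r a <= 0 ->
  c <= Rabs (adv K pi r a) ->
  gate K pi r eta a * pi a <= Rpower (pi a) (1 + c / eta).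
Proof.
  intros Heta Hpi HU Hc.
  set (t := Rabs (adv K pi r a) / eta).
  assert (Hct : c / eta <= t).
  { unfold t, Rdiv; apply Rmult_le_compat_r; [left; apply Rinv_0_lt_compat|]; lra. }
  apply Rle_trans with (Rpower (pi a) (1 + t)).
  - rewrite Rpower_plus, Rpower_1, (Rmult_comm (pi a)) by lra.
    apply Rmult_le_compat_r; [lra | apply gate_le_Rpower, HU].
  - apply Rpower_le_exponent_anti; lra.
Qed.

Theorem lemma2 (K : nat) (pi r : nat -> R) (eta : R)
  (Hpi : full_support_dist K pi) (Heta : 0 < eta) :
  forall k : nat, (k < K)%nat -> adv K pi r k < 0 ->
    gate K pi r eta k <= Rpower (pi k) (Rabs (adv K pi r k) / eta)
    /\
    (forall j : nat, (j < K)%nat -> r j > r k ->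
       Rabs (adv K pi r k) >= gap r j k / 2 ->
       gate K pi r eta k * pi k <= Rpower (pi k) (1 + gap r j k / (2 * eta))).
Proof.
  intros k Hk HU.
  assert (Hpik : 0 < pi k <= 1).
  { split; [apply (proj1 Hpi), Hk | exact (full_support_dist_le_1 K pi k Hpi Hk)]. }
  split; [apply gate_le_Rpower; lra|].
  (* Only [|U(k)| >= Delta_jk / 2] is used. *)
  intros j _ _ Hgap.
  replace (gap r j k / (2 * eta)) with (gap r j k / 2 / eta) by (field; lra).
  apply gate_mul_prob_le; lra.
Qed.
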